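(* Let $n,m$ be positive integers, $\lambda\in\mathcal{P}^m_n$, and let $k_{i,j}=k_{i,j}(\lambda)$ be defined recursively by $$k_{i,j}=\min\left\{m,\left\lceil\frac{\lambda_i-\sum_{\ell=j+1}^n k_{i,\ell}+\sum_{\ell=i+1}^j k_{\ell,j}}{j-i+1}\right\rceil\right\},\quad 1\le i\le j\le n.$$ Then $k_{i,j}\ge k_{i,j-1}$ for all $1\le i<j\le n$.
   Context: $\mathcal{P}^m_n$ is the set of integer partitions $(\lambda_1\ge\cdots\ge\lambda_n\ge0)$ with $\lambda_i\le m(n-i+1)$ for all $i$. The recursion is carried out in order of decreasing $i$ and, for fixed $i$, decreasing $j$ (the right-hand side only involves $k_{i,\ell}$ with $\ell>j$ and $k_{\ell,j}$ with $\ell>i$). *)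

From mathcomp Require Import all_boot all_order all_algebra.
Set Implicit Arguments. Unset Strict Implicit. Unset Printing Implicit Defensive.
Import Order.TTheory GRing.Theory Num.Theory.
Local Open Scope ring_scope.

(* lambda_i is [lam i] for 1 <= i <= n (1-indexed; other values unused).
   Membership in P^m_n. *)
Definition in_Pmn (n m : nat) (lam : nat -> nat) : Prop :=
  (forall i, (1 <= i)%N -> (i < n)%N -> (lam i.+1 <= lam i)%N) /\
  (forall i, (1 <= i)%N -> (i <= n)%N -> (lam i <= m * (n - i + 1))%N).

(* The value of the recursion formula for the entry (i,j), given the
   already computed entries [row l = k_{i,l}] (l > j) and
   [K l j = k_{l,j}] (l > i). *)
Definition kstep (n m : nat) (lam : nat -> nat) (i j : nat)
    (row : nat -> int) (K : nat -> nat -> int) : int :=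
  Order.min (m%:Z)
    (Num.ceil (((lam i)%:Z - (\sum_(j.+1 <= l < n.+1) row l)
                 + (\sum_(i.+1 <= l < j.+1) K l j))%:~R
               / ((j - i + 1)%N%:R) : rat)).

(* Row i, computed for j = n, n-1, ..., in decreasing order:
   after t steps, entries j >= n - t are correct. *)
Fixpoint krow (n m : nat) (lam : nat -> nat) (i : nat)
    (K : nat -> nat -> int) (t : nat) : nat -> int :=
  match t with
  | 0 => fun j => if j == n then kstep n m lam i n (fun _ => 0) K else 0
  | t'.+1 => let r := krow n m lam i K t' in
      fun j => if j == (n - t)%N then kstep n m lam i j r K else r j
  end.

(* Rows computed for i = n, n-1, ..., 1: after s steps, rows i > n - s
   are correct. *)
Fixpoint kaux (n m : nat) (lam : nat -> nat) (s : nat) : nat -> nat -> int :=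
  match s with
  | 0 => fun _ _ => 0
  | s'.+1 => let K := kaux n m lam s' in
      fun i j => if i == (n - s')%N then krow n m lam i K n j else K i j
  end.

Definition k (n m : nat) (lam : nat -> nat) : nat -> nat -> int :=
  kaux n m lam n.

From mathcomp Require Import all_boot all_order all_algebra.
From mathcomp Require Import zify.
Import Order.TTheory GRing.Theory Num.Theory.
Local Open Scope ring_scope.

(* Let r_{i,j} = lambda_i - \sum_{l > j} k_{i,l} be what remains of row i
   left of column j, and c_{i,j} = \sum_{i < l <= j} k_{l,j} the column sum
   below (i,j), so that k_{i,j} = min(m, ceil((r_{i,j} + c_{i,j})/(j-i+1))).
   First, by downward induction on j, r_{i+1,j} <= r_{i,j}: when k_{i+1,j}
   is not saturated it is at least the average (r_{i+1,j} + c_{i+1,j})/(j-i),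
   and this keeps k_{i,j} - k_{i+1,j} below r_{i,j} - r_{i+1,j}.  In
   particular r_{i,i} >= 0, so the diagonal entries are nonnegative.  Then,
   by induction from the bottom row upwards, monotonicity of the rows below (i,j)
   makes c_{i,j-1} <= c_{i,j}, and an unsaturated k_{i,j} is large enough
   to dominate the ceiling defining k_{i,j-1}. *)

Lemma ceil_divn_le (R : archiRealFieldType) (s a : int) (d : nat) : (0 < d)%N ->
  (Num.ceil (s%:~R / d%:R : R) <= a) = (s <= a * d%:Z).
Proof.
move=> d_gt0; rewrite ceil_le_int ler_pdivrMr ?ltr0n //.
by rewrite -[d%:R]/((d%:Z)%:~R) -intrM ler_int.
Qed.

Lemma le_ceil_divn (R : archiRealFieldType) (s : int) (d : nat) : (0 < d)%N ->
  s <= Num.ceil (s%:~R / d%:R : R) * d%:Z.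
Proof. by move=> d_gt0; rewrite -(ceil_divn_le R). Qed.

Section Recursion.
Variables (n m : nat) (lam : nat -> nat).

Lemma eq_kstep i j r r' K K' :
  (forall l, (j < l)%N -> (l <= n)%N -> r l = r' l) ->
  (forall l, (i < l)%N -> K l j = K' l j) ->
  kstep n m lam i j r K = kstep n m lam i j r' K'.
Proof.
move=> eq_r eq_K; rewrite /kstep (@eq_big_nat _ _ _ j.+1 n.+1 r r'); last first.
  by move=> l /andP[lt_jl le_ln]; exact: eq_r.
rewrite (@eq_big_nat _ _ _ i.+1 j.+1 (K^~ j) (K'^~ j)) //.
by move=> l /andP[lt_il _]; exact: eq_K.
Qed.

Lemma krow_stable i K t t' l : (1 <= l)%N -> (n - t <= l)%N -> (t <= t')%N ->
  krow n m lam i K t' l = krow n m lam i K t l.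
Proof.
move=> l_gt0 le_l; elim: t' => [|t' IHt]; first by rewrite leqn0 => /eqP->.
rewrite leq_eqVlt => /orP[/eqP->//|lt_t] /=.
by rewrite IHt //; case: eqP => // eq_l; lia.
Qed.

Lemma krowE i K j : (1 <= j)%N -> (j <= n)%N ->
  krow n m lam i K n j = kstep n m lam i j (krow n m lam i K n) K.
Proof.
move=> j_gt0 le_jn; rewrite (@krow_stable i K (n - j)) ?leq_subr //; try lia.
case e: (n - j)%N => [|t] /=.
  have -> : j = n by lia.
  by rewrite eqxx; apply: eq_kstep => // l; lia.
rewrite -e subKn // eqxx; apply: eq_kstep => // l lt_jl le_ln.
by rewrite (@krow_stable i K t n l) //; lia.
Qed.

Lemma kaux_stable s s' i j : (1 <= i)%N -> (n - s < i)%N -> (s <= s')%N ->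
  kaux n m lam s' i j = kaux n m lam s i j.
Proof.
move=> i_gt0 lt_i; elim: s' => [|s' IHs]; first by rewrite leqn0 => /eqP->.
rewrite leq_eqVlt => /orP[/eqP->//|lt_s] /=.
by rewrite IHs //; case: eqP => // eq_i; lia.
Qed.

Lemma kaux_out s i j : (n < i)%N -> kaux n m lam s i j = 0.
Proof. by move=> lt_ni; elim: s => //= s ->; case: eqP => // eq_i; lia. Qed.

Lemma k_krow i j : (1 <= i)%N -> (i <= n)%N ->
  k n m lam i j = krow n m lam i (kaux n m lam (n - i)) n j.
Proof.
move=> i_gt0 le_in; rewrite /k (@kaux_stable (n - i).+1) //; try lia.
by rewrite /= subKn // eqxx.
Qed.

Lemma kE i j : (1 <= i)%N -> (i <= n)%N -> (1 <= j)%N -> (j <= n)%N ->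
  k n m lam i j = kstep n m lam i j (k n m lam i) (k n m lam).
Proof.
move=> i_gt0 le_in j_gt0 le_jn; rewrite k_krow // krowE //.
apply: eq_kstep => [l _ _|l lt_il]; first by rewrite [RHS]k_krow.
have [le_ln|lt_nl] := leqP l n; last by rewrite /k !kaux_out.
by rewrite /k (@kaux_stable (n - i) n) //; lia.
Qed.

Let K := k n m lam.

Definition row_residue i j : int := (lam i)%:Z - \sum_(j.+1 <= l < n.+1) K i l.

Definition col_sum i j : int := \sum_(i.+1 <= l < j.+1) K l j.

Lemma k_ceil i j : (1 <= i)%N -> (i <= n)%N -> (1 <= j)%N -> (j <= n)%N ->
  K i j = Order.min (m%:Z)
    (Num.ceil ((row_residue i j + col_sum i j)%:~R / (j - i + 1)%N%:R : rat)).
Proof. by move=> *; rewrite /K kE. Qed.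

Lemma row_residue_pred i j : (1 <= j)%N -> (j <= n)%N ->
  row_residue i j.-1 = row_residue i j - K i j.
Proof.
move=> j_gt0 le_jn; rewrite /row_residue prednK // (@big_ltn _ _ _ j n.+1) //.
by rewrite opprD addrA addrAC.
Qed.

Lemma col_sum_recl i j : (i < j)%N -> col_sum i j = K i.+1 j + col_sum i.+1 j.
Proof. by move=> lt_ij; rewrite /col_sum big_ltn. Qed.

Section Entry.
Variables i j : nat.
Hypotheses (i_gt0 : (1 <= i)%N) (le_ij : (i <= j)%N) (le_jn : (j <= n)%N).

Let j_gt0 : (1 <= j)%N. Proof. exact: leq_trans le_ij. Qed.
Let le_in : (i <= n)%N. Proof. exact: leq_trans le_jn. Qed.

Lemma k_le_m : K i j <= m%:Z.
Proof. by rewrite k_ceil // ge_min lexx. Qed.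

Lemma k_le a : row_residue i j + col_sum i j <= a * (j - i + 1)%N%:Z ->
  K i j <= a.
Proof.
by move=> le_a; rewrite k_ceil // ge_min ceil_divn_le ?addn1 // -addn1 le_a orbT.
Qed.

Lemma k_saturated_or_ge : K i j = m%:Z \/
  row_residue i j + col_sum i j <= K i j * (j - i + 1)%N%:Z.
Proof.
have := @k_ceil i j i_gt0 le_in j_gt0 le_jn; rewrite minEle.
by case: ifP => _ ->; [left | right; rewrite le_ceil_divn ?addn1].
Qed.

End Entry.

Lemma k_diag i : (1 <= i)%N -> (i <= n)%N -> K i i = Order.min (m%:Z) (row_residue i i).
Proof. by move=> *; rewrite k_ceil // subnn /col_sum big_geq // addr0 divr1 intrKceil. Qed.

Hypothesis lam_nonincr : forall i, (1 <= i)%N -> (i < n)%N -> (lam i.+1 <= lam i)%N.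

Lemma row_residue_antitone i j : (1 <= i)%N -> (i <= j)%N -> (j <= n)%N -> (i < n)%N ->
  row_residue i.+1 j <= row_residue i j.
Proof.
move=> i_gt0 le_ij le_jn lt_in; rewrite -(subKn le_jn).
elim: (n - j)%N (leq_subr j n) (leq_sub2l n le_ij) => [|t IHt] le_tn le_t.
  by rewrite subn0 /row_residue !big_geq // !subr0 lez_nat lam_nonincr.
set J := (n - t)%N.
have eJ : (n - t.+1)%N = J.-1 by rewrite /J; lia.
have lt_iJ : (i < J)%N by rewrite /J; lia.
have le_Jn : (J <= n)%N by rewrite /J; lia.
have le_res : row_residue i.+1 J <= row_residue i J := IHt (ltnW le_tn) (ltnW le_t).
rewrite eJ !row_residue_pred //; try lia.
have [sat|ge_avg] := @k_saturated_or_ge i.+1 J isT lt_iJ le_Jn.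
  by have := @k_le_m i J i_gt0 (ltnW lt_iJ) le_Jn; lia.
suff : K i J <= row_residue i J - row_residue i.+1 J + K i.+1 J by lia.
apply: k_le => //; first exact: ltnW.
rewrite col_sum_recl //.
have e_d : (J - i.+1 + 1)%N = (J - i)%N by lia.
rewrite e_d in ge_avg.
have -> : (J - i + 1)%N%:Z = (J - i)%N%:Z + 1 by lia.
have : 0 <= (row_residue i J - row_residue i.+1 J) * (J - i)%N%:Z.
  by rewrite mulr_ge0 ?subr_ge0.
rewrite mulrDr mulr1 !mulrDl mulNr; lia.
Qed.

Lemma row_residue_diag_ge0 i : (1 <= i)%N -> (i <= n)%N -> 0 <= row_residue i i.
Proof.
move=> i_gt0 le_in; have [lt_in|le_ni] := ltnP i n; last first.
  by rewrite /row_residue big_geq ?subr0 //; lia.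
have := @row_residue_antitone i i i_gt0 (leqnn i) le_in lt_in.
rewrite -[i in row_residue _ i]/(i.+1.-1) row_residue_pred // k_diag //.
by have := ge_min (m%:Z) (row_residue i.+1 i.+1) (row_residue i.+1 i.+1); lia.
Qed.

Lemma k_diag_ge0 i : (1 <= i)%N -> (i <= n)%N -> 0 <= K i i.
Proof. by move=> i_gt0 le_in; rewrite k_diag // le_min row_residue_diag_ge0. Qed.

Lemma col_sum_pred_le i j : (1 <= i)%N -> (i < j)%N -> (j <= n)%N ->
  (forall l, (i < l)%N -> (l < j)%N -> K l j.-1 <= K l j) ->
  col_sum i j.-1 <= col_sum i j.
Proof.
move=> i_gt0 lt_ij le_jn le_rows.
rewrite /col_sum prednK ?(leq_ltn_trans _ lt_ij) // [X in _ <= X]big_nat_recr //=.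
apply: ler_wpDr; first by apply: k_diag_ge0; lia.
by apply: ler_sum_nat => l /andP[lt_il lt_lj]; exact: le_rows.
Qed.

Lemma k_row_mono i j : (1 <= i)%N -> (i < j)%N -> (j <= n)%N -> K i j.-1 <= K i j.
Proof.
have [t] := ubnP (n - i); elim: t i j => // t IHt i j lt_t i_gt0 lt_ij le_jn.
have [sat|ge_avg] := @k_saturated_or_ge i j i_gt0 (ltnW lt_ij) le_jn.
  by rewrite sat; apply: k_le_m => //; lia.
apply: k_le => //; try lia.
have le_col : col_sum i j.-1 <= col_sum i j.
  by apply: col_sum_pred_le => // l lt_il lt_lj; apply: IHt => //; lia.
rewrite row_residue_pred; try lia.
have -> : (j.-1 - i + 1)%N = (j - i)%N by lia.
have e_d : (j - i + 1)%N%:Z = (j - i)%N%:Z + 1 by lia.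
by rewrite e_d mulrDr mulr1 in ge_avg; lia.
Qed.

End Recursion.

Theorem lemma4p3 (n m : nat) (lam : nat -> nat) :
  (0 < n)%N -> (0 < m)%N -> in_Pmn n m lam ->
  forall i j : nat, (1 <= i)%N -> (i < j)%N -> (j <= n)%N ->
    k n m lam i j.-1 <= k n m lam i j.
Proof. by move=> _ _ [lam_nonincr _] i j; exact: k_row_mono. Qed.
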